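(* Let $\mathcal{G}=\langle V,E,\omega,\lambda\rangle$ be any finite weighted coloured--edge graph with colour set $M$. Then there exists a canonical weighted coloured--edge graph $\mathcal{G}^*=\langle V,E^*,\omega^*,\lambda^*\rangle$ with the same vertex set $V$ and the same colour set $M$, such that $E\subseteq E^*$, $\lambda^*|_E=\lambda$, and every minimal path in $\mathcal{G}$ (from any vertex $u$ to any other vertex $v$) is also a minimal path from $u$ to $v$ in $\mathcal{G}^*$.
   Context: A weighted coloured--edge graph $\mathcal{G}=\langle V,E,\omega,\lambda\rangle$ consists of a directed multigraph with vertex set $V$ and edge set $E$ (each edge $e$ has an initial vertex and a distinct terminal vertex; multiple edges between the same ordered pair are allowed), a weight function $\omega:E\to\mathbb{R}^+$ (strictly positive reals), and a surjective colour function $\lambda:E\to M$ onto a set $M$ of colours. It is finite if $V$ and $E$ are finite. A path from $u$ to $v$ is a sequence of edges $e_1,\dots,e_l$ ($l\ge 1$) such that the initial vertex of $e_1$ is $u$, the terminal vertex of $e_l$ is $v$, the terminal vertex of $e_i$ is the initial vertex of $e_{i+1}$, and no vertex is visited twice. For a path $p$ and colour $c\in M$, $\omega_c(p)$ is the sum of $\omega(e)$ over the edges $e$ of $p$ with $\lambda(e)=c$. For paths $p,q$ with the same source and destination, $p\le q$ means $\omega_c(p)\le\omega_c(q)$ for every $c\in M$. A path $p$ from $u$ to $v$ is minimal if there is no path $q$ from $u$ to $v$ with $q\le p$ and $\omega_c(q)<\omega_c(p)$ for some colour $c$. The graph is canonical if (i) it is complete in each colour: for all distinct vertices $x\ne y$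 and every colour $c$ there is exactly one edge from $x$ to $y$ of colour $c$; and (ii) it satisfies the triangle inequality in each colour: for all distinct vertices $x,y,z$ and every colour $c$, the edges $e_{xy},e_{yz},e_{xz}$ of colour $c$ satisfy $\omega(e_{xz})\le\omega(e_{xy})+\omega(e_{yz})$.
   Formalization: The graph 𝒢 has no two distinct edges with the same initial vertex, the same terminal vertex and the same colour; parallel edges of different colours remain allowed. Apart from conventions, each condition added here is assumed in the paper as well or is needed for the statement above to hold. *)

From HB Require Import structures.
From mathcomp Require Import all_boot all_order all_algebra.
Set Implicit Arguments. Unset Strict Implicit. Unset Printing Implicit Defensive.
Import Order.TTheory GRing.Theory Num.Theory.
Local Open Scope ring_scope.

Section WCEG.
Variables (R : realFieldType) (V : finType) (M : eqType) (E : Type).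
Variables (src dst : E -> V) (w : E -> R) (col : E -> M).

Definition wceg : Prop :=
  [/\ forall e, src e <> dst e,
      forall e, 0 < w e
    & forall c : M, exists e, col e = c].

Fixpoint walk (u v : V) (p : seq E) : bool :=
  match p with
  | [::] => false
  | [:: e] => (src e == u) && (dst e == v)
  | e :: p' => (src e == u) && walk (dst e) v p'
  end.

Definition is_path (u v : V) (p : seq E) : bool :=
  walk u v p && uniq (u :: map dst p).

Definition wcol (c : M) (p : seq E) : R := \sum_(e <- p | col e == c) w e.

Definition minimal_path (u v : V) (p : seq E) : Prop :=
  is_path u v p /\
  ~ (exists q, [/\ is_path u v q,
                   forall c, wcol c q <= wcol c p
                 & exists c, wcol c q < wcol c p]).

Definition canonical : Prop :=
  (forall (x y : V) (c : M), x != y ->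
     exists e, [/\ src e = x, dst e = y, col e = c &
                 forall e', src e' = x -> dst e' = y -> col e' = c -> e' = e]) /\
  (forall (x y z : V) (c : M) (exy eyz exz : E),
     x != y -> y != z -> x != z ->
     src exy = x -> dst exy = y -> col exy = c ->
     src eyz = y -> dst eyz = z -> col eyz = c ->
     src exz = x -> dst exz = z -> col exz = c ->
     w exz <= w exy + w eyz).

Definition no_parallel_same_colour : Prop :=
  forall e1 e2, src e1 = src e2 -> dst e1 = dst e2 -> col e1 = col e2 -> e1 = e2.
End WCEG.

From HB Require Import structures.
From mathcomp Require Import all_boot all_order all_algebra.
Set Implicit Arguments.
Unset Strict Implicit.
Unset Printing Implicit Defensive.

Import Order.TTheory GRing.Theory Num.Theory.
Local Open Scope ring_scope.

(* G* keeps the vertices of G and, for every ordered pair x <> y and colour c,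
   has one edge of colour c whose weight is the length of a shortest
   c-coloured path from x to y in G (a cap exceeding every path weight when
   there is none); the edges of G become edges of G*, and those missing from G
   are added.  These weights satisfy the triangle inequality and never exceed
   the original weights.  If a G*-path q dominated a minimal G-path p, every
   edge of q would weigh less than the cap, so substituting for it the
   monochromatic G-path realising its weight turns q into a G-walk dominating
   p; shortcutting that walk into a path contradicts the minimality of p. *)

Section Walks.
Variables (V : finType) (E : eqType) (src dst : E -> V).
Local Notation walk := (walk src dst).
Local Notation is_path := (is_path src dst).

Lemma walk_cat u x v p q : walk u x p -> walk x v q -> walk u v (p ++ q).
Proof.
elim: p u => [|e p IHp] u //; case: p IHp => [|e' p] IHp.
  by clear IHp; case: q => [|e' q] // /andP[He /eqP <-] Hq; rewrite /= He.
by move=> /= /andP[He Hp] Hq; rewrite He; exact: IHp Hp Hq.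
Qed.

Lemma mem_walk_dst u v p : walk u v p -> v \in map dst p.
Proof.
elim: p u => [|e p IHp] u //; case: p IHp => [|e' p] IHp.
  by move=> /andP[_ /eqP <-]; rewrite mem_head.
by move=> /= /andP[_ /IHp Hv]; rewrite inE Hv orbT.
Qed.

Lemma path_neq u v p : is_path u v p -> u != v.
Proof.
case/andP=> /mem_walk_dst Hv /= /andP[Hu _].
by apply: contraNneq Hu => ->.
Qed.

Lemma path_uniq u v p : is_path u v p -> uniq p.
Proof. by case/andP=> _ /= /andP[_ /map_uniq]. Qed.

Lemma size_path u v p : is_path u v p -> (size p < #|V|)%N.
Proof.
case/andP=> _ /card_uniqP Hcard.
by have := max_card (mem (u :: map dst p)); rewrite Hcard /= size_map.
Qed.

Lemma path_suffix a b r x : is_path a b r -> x \in map dst r -> x != b ->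
  exists2 r', is_path x b r' & subseq r' r.
Proof.
elim: r a => [|f r IHr] a //; case: r IHr => [|f' r] IHr.
  by case/andP=> /andP[_ /eqP <-]; rewrite inE => _ /eqP ->; rewrite eqxx.
case/andP=> /andP[_ Hw] /and3P[_ Hf Hu].
have Hr : is_path (dst f) b (f' :: r) by apply/andP; split; last rewrite cons_uniq Hf.
rewrite inE => /orP[/eqP ->|Hx] Hxb; first by exists [:: f' & r]; last exact: subseq_cons.
have [r' Hr' Hsub] := IHr _ Hr Hx Hxb.
by exists r' => //; apply: subseq_trans Hsub (subseq_cons _ _).
Qed.

Hypothesis src_neq_dst : forall e, src e != dst e.

Lemma edge_path e : is_path (src e) (dst e) [:: e].
Proof. by rewrite /is_path /= !eqxx inE src_neq_dst. Qed.

Lemma walk_subseq_path u v q : walk u v q -> u != v ->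
  exists2 p, is_path u v p & subseq p q.
Proof.
elim: q u => [|e q IHq] u //; case: q IHq => [|e' q] IHq.
  by case/andP=> /eqP <- /eqP <- _; exists [:: e]; rewrite ?edge_path //= eqxx.
case/andP=> /eqP <- Hw Hsv.
have [<-|Hdv] := eqVneq (dst e) v.
  by exists [:: e]; rewrite ?edge_path //= eqxx.
have [r Hr Hsub] := IHq (dst e) Hw Hdv.
have Hsub' : subseq r [:: e, e' & q] := subseq_trans Hsub (subseq_cons _ _).
have [Hu|Hu] := boolP (src e \in map dst r).
  have [r' Hr' Hsub''] := path_suffix Hr Hu Hsv.
  by exists r' => //; apply: subseq_trans Hsub'' Hsub'.
exists (e :: r); last by rewrite /= eqxx.
case: r Hr {Hsub Hsub'} Hu => [|f r] // /andP[Hrw Hru] Hu.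
apply/andP; split; first by apply/andP.
by rewrite /= inE negb_or Hu -/(uniq (dst e :: map dst (f :: r))) Hru andbT src_neq_dst.
Qed.

End Walks.

Lemma ler_sum_subseq (R : numDomainType) (I : eqType) (F : I -> R) (P : pred I)
    s1 s2 : (forall i, 0 <= F i) -> subseq s1 s2 ->
  \sum_(i <- s1 | P i) F i <= \sum_(i <- s2 | P i) F i.
Proof.
move=> F_ge0; elim: s2 s1 => [|y s2 IHs] [|x s1] //= Hsub.
- by rewrite big_nil sumr_ge0.
- move: Hsub; rewrite [X in _ <= X]big_cons; case: eqP => [<-|_] Hsub.
    by rewrite big_cons; case: (P x); rewrite ?lerD2l IHs.
  have := IHs _ Hsub; case: (P y) => // /le_trans; apply.
  by rewrite lerDr.
Qed.

Section ColourWeights.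
Variables (R : realFieldType) (E : eqType) (M : eqType) (w : E -> R) (col : E -> M).
Local Notation wcol := (wcol w col).

Definition weight (s : seq E) : R := \sum_(e <- s) w e.

Definition monochrome (c : M) (s : seq E) : bool := all (fun e => col e == c) s.

Lemma wcol_cat c s1 s2 : wcol c (s1 ++ s2) = wcol c s1 + wcol c s2.
Proof. exact: big_cat. Qed.

Lemma wcol_cons c e s :
  wcol c (e :: s) = (if col e == c then w e else 0) + wcol c s.
Proof. by rewrite /wcol big_cons; case: ifP; rewrite ?add0r. Qed.

Lemma wcol_monochrome c0 c s : monochrome c0 s ->
  wcol c s = if c0 == c then weight s else 0.
Proof.
elim: s => [|e s IHs] /=; first by rewrite /wcol /weight !big_nil; case: ifP.
case/andP=> /eqP col_e /IHs IH; rewrite wcol_cons IH col_e /weight big_cons.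
by case: ifP; rewrite ?addr0.
Qed.

Hypothesis w_ge0 : forall e, 0 <= w e.

Lemma wcol_subseq c s1 s2 : subseq s1 s2 -> wcol c s1 <= wcol c s2.
Proof. exact: ler_sum_subseq. Qed.

Lemma wcol_le_weight c s : wcol c s <= weight s.
Proof. by rewrite /wcol /weight big_mkcond ler_sum // => e _; case: ifP. Qed.

Lemma mem_le_wcol e s : e \in s -> w e <= wcol (col e) s.
Proof.
elim: s => [|x s IHs] //; rewrite inE wcol_cons => /predU1P[<-|/IHs].
  by rewrite eqxx lerDl sumr_ge0.
by move/le_trans; apply; rewrite lerDr; case: ifP.
Qed.

End ColourWeights.

Section Domination.
Variables (R : realFieldType) (V : finType) (E M : eqType).
Variables (src dst : E -> V) (w : E -> R) (col : E -> M).
Hypotheses (w_ge0 : forall e, 0 <= w e) (src_neq_dst : forall e, src e != dst e).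

Lemma minimal_path_dominating_walk u v p q c :
    minimal_path src dst w col u v p -> walk src dst u v q ->
    (forall c', wcol w col c' q <= wcol w col c' p) ->
  wcol w col c q = wcol w col c p.
Proof.
move=> [Hp Hmin] Hq Hle; apply/eqP; rewrite eq_le Hle leNgt; apply/negP => Hlt.
have [r Hr Hsub] := walk_subseq_path src_neq_dst Hq (path_neq Hp).
apply: Hmin; exists r; split=> // [c'|].
  exact: le_trans (wcol_subseq col w_ge0 c' Hsub) (Hle c').
by exists c; apply: le_lt_trans (wcol_subseq col w_ge0 c Hsub) Hlt.
Qed.

Variables (F : eqType) (src2 dst2 : F -> V) (w2 : F -> R) (col2 : F -> M).

Lemma walk_expand u v q : walk src2 dst2 u v q ->
    (forall f, f \in q -> exists2 s,
       walk src dst (src2 f) (dst2 f) s && monochrome col (col2 f) s &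
       weight w s <= w2 f) ->
  exists2 Q, walk src dst u v Q & forall c, wcol w col c Q <= wcol w2 col2 c q.
Proof.
elim: q u => [|f q IHq] u // Hq Hreal.
have [s /andP[Hs Hmono] Hweight] := Hreal f (mem_head _ _).
have Hle c : wcol w col c s <= if col2 f == c then w2 f else 0.
  by rewrite (wcol_monochrome _ _ Hmono); case: ifP.
case: q IHq Hq Hreal => [|f' q] IHq.
  move=> /andP[/eqP <- /eqP <-] _; exists s => // c.
  by rewrite wcol_cons [X in _ + X]big_nil addr0.
move=> /andP[/eqP <- Hw] Hreal.
have [Q HQ HQle] := IHq (dst2 f) Hw (fun g Hg => Hreal g (@mem_behead _ (f :: _) g Hg)).
exists (s ++ Q) => [|c]; first exact: walk_cat Hs HQ.
by rewrite wcol_cat wcol_cons lerD.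
Qed.

End Domination.

Section Completion.
Variables (R : realFieldType) (V E : finType) (M : eqType).
Variables (src dst : E -> V) (w : E -> R) (col : E -> M).
Hypothesis HG : wceg src dst w col.

Let w_gt0 e : 0 < w e. Proof. by case: HG. Qed.
Let w_ge0 e : 0 <= w e. Proof. exact: ltW. Qed.
Let src_neq_dst e : src e != dst e. Proof. by case: HG => no_loop _ _; apply/eqP. Qed.

Definition wcap : R := 1 + \sum_e w e.

Lemma weight_lt_cap s : uniq s -> weight w s < wcap.
Proof.
move=> s_uniq; rewrite /weight (big_uniq _ s_uniq) /wcap ltr_pwDl //.
by rewrite [X in X <= _]big_mkcond ler_sum // => e _; case: ifP.
Qed.

Definition mono_path (c : M) (x y : V) (s : seq E) : bool :=
  is_path src dst x y s && monochrome col c s.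

(* Paths have fewer than [#|V|] edges, so padding with [None] enumerates them
   by a finite type; [wcap] exceeds the weight of every path and plays the role
   of an infinite distance. *)
Definition mono_dist (c : M) (x y : V) : R :=
  \big[Order.min/wcap]_(t : #|V|.-tuple (option E) | mono_path c x y (pmap id t))
    weight w (pmap id t).

Lemma mono_dist_le_cap c x y : mono_dist c x y <= wcap.
Proof. exact: bigmin_le_id. Qed.

Lemma mono_dist_gt0 c x y : 0 < mono_dist c x y.
Proof.
apply/bigmin_gtP; split=> [|t /andP[/andP[Hwalk _] _]].
  by rewrite ltr_pwDl // sumr_ge0.
by case: (pmap id t) Hwalk => [|e s] // _; rewrite /weight big_cons ltr_pwDl ?sumr_ge0.
Qed.

Lemma mono_dist_le_walk c x y s : x != y -> walk src dst x y s ->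
  monochrome col c s -> mono_dist c x y <= weight w s.
Proof.
move=> Hxy Hs Hmono; have [p Hp Hsub] := walk_subseq_path src_neq_dst Hs Hxy.
have Hsize : size (map Some p ++ nseq (#|V| - size p) None) == #|V|.
  by rewrite size_cat size_map size_nseq subnKC // ltnW // (size_path Hp).
have Hpmap : pmap id (Tuple Hsize) = p.
  have pmap_none k : pmap id (nseq k (@None E)) = [::] by elim: k.
  by rewrite pmap_cat pmap_none cats0 (@map_pK _ _ id Some (fun _ => erefl)).
apply: (@bigmin_inf _ _ _ _ (Tuple Hsize)); rewrite Hpmap.
  by rewrite /mono_path Hp; apply/allP => e /(mem_subseq Hsub); apply: (allP Hmono).
exact: ler_sum_subseq.
Qed.

Lemma mono_dist_witness c x y : mono_dist c x y < wcap ->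
  exists2 s, walk src dst x y s && monochrome col c s & weight w s = mono_dist c x y.
Proof.
rewrite /mono_dist.
set P := fun t : #|V|.-tuple (option E) => mono_path c x y (pmap id t).
case: (pickP P) => [t0 Pt0 _|noP]; last by rewrite big_pred0 ?ltxx.
have [|t /andP[/andP[Hwalk _] Hmono] ->] :=
  eq_bigmin (x := wcap) t0 P (fun t => weight w (pmap id t)) Pt0.
  by move=> t /andP[/path_uniq/weight_lt_cap/ltW].
by exists (pmap id t); rewrite ?Hwalk.
Qed.

Lemma mono_dist_triangle c x y z : x != z ->
  mono_dist c x z <= mono_dist c x y + mono_dist c y z.
Proof.
move=> Hxz; have dist_ge0 x' y' := ltW (mono_dist_gt0 c x' y').
have capped d1 d2 : wcap <= d1 -> 0 <= d2 -> mono_dist c x z <= d1 + d2.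
  by move=> Hd1 Hd2; apply: le_trans (mono_dist_le_cap c x z) (le_trans Hd1 _); rewrite lerDl.
have [Hxy|Hxy] := ltP (mono_dist c x y) wcap; last exact: capped Hxy (dist_ge0 _ _).
have [Hyz|Hyz] := ltP (mono_dist c y z) wcap; last first.
  by rewrite addrC; exact: capped Hyz (dist_ge0 _ _).
have [s1 /andP[Hs1 Hm1] <-] := mono_dist_witness Hxy.
have [s2 /andP[Hs2 Hm2] <-] := mono_dist_witness Hyz.
rewrite /weight -big_cat; apply: mono_dist_le_walk Hxz (walk_cat Hs1 Hs2) _.
by rewrite /monochrome all_cat; apply/andP.
Qed.

Lemma mono_dist_le_edge e : mono_dist (col e) (src e) (dst e) <= w e.
Proof.
have -> : w e = weight w [:: e] by rewrite /weight big_seq1.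
by apply: mono_dist_le_walk (src_neq_dst e) _ _; rewrite /= ?eqxx // /monochrome /= eqxx.
Qed.

Definition missing (t : V * V * M) : bool :=
  let: (x, y, c) := t in
  (x != y) && [forall e, ~~ [&& src e == x, dst e == y & col e == c]].

Definition missing_edge := {t : V * V * M | missing t}.

Definition star_label (a : E + missing_edge) : V * V * M :=
  match a with inl e => (src e, dst e, col e) | inr f => val f end.

Definition star_src (a : E + missing_edge) : V := (star_label a).1.1.
Definition star_dst (a : E + missing_edge) : V := (star_label a).1.2.
Definition star_col (a : E + missing_edge) : M := (star_label a).2.
Definition star_weight (a : E + missing_edge) : R :=
  mono_dist (star_col a) (star_src a) (star_dst a).

Lemma star_labelE a : star_label a = (star_src a, star_dst a, star_col a).
Proof. by rewrite /star_src /star_dst /star_col; case: (star_label a) => [[]]. Qed.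

Hypothesis Hnp : no_parallel_same_colour src dst col.

Lemma star_label_inj : injective star_label.
Proof.
have Hmiss e t : missing t -> (src e, dst e, col e) <> t.
  case: t => [[x y] c] /andP[_ /forallP /(_ e) /negP Hne] Heq.
  by apply: Hne; case: Heq => -> -> ->; rewrite !eqxx.
case=> [e|f] [e'|f'] //= Heq; first by case: Heq => *; congr inl; apply: Hnp.
- by case: (Hmiss e _ (valP f') Heq).
- by case: (Hmiss e' _ (valP f) (esym Heq)).
- by congr inr; apply: val_inj.
Qed.

Lemma star_label_onto x y c : x != y -> exists a, star_label a = (x, y, c).
Proof.
move=> Hxy; case: (boolP (missing (x, y, c))) => [Hmiss|].
  by exists (inr (exist missing _ Hmiss)).
rewrite /= Hxy /= negb_forall => /existsP[e].
by rewrite negbK => /and3P[/eqP<- /eqP<- /eqP<-]; exists (inl e).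
Qed.

Lemma star_wceg : wceg star_src star_dst star_weight star_col.
Proof.
split=> [[e|f]|a|c]; first exact: (elimN eqP (src_neq_dst e)).
- by case: f => [[[x y] c] Hf]; rewrite /star_src /star_dst /=; case/andP: Hf => /eqP.
- exact: mono_dist_gt0.
- by case: HG => _ _ /(_ c) [e <-]; exists (inl e).
Qed.

Lemma star_canonical : canonical star_src star_dst star_weight star_col.
Proof.
split=> [x y c Hxy | x y z c exy eyz exz Hxy Hyz Hxz].
  have [a] := star_label_onto c Hxy; rewrite star_labelE => -[Hs Hd Hc].
  exists a; split=> // a' Hs' Hd' Hc'; apply: star_label_inj.
  by rewrite !star_labelE Hs Hd Hc Hs' Hd' Hc'.
by rewrite /star_weight => -> -> -> -> -> -> -> -> ->; exact: mono_dist_triangle.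
Qed.

Lemma star_walk_inl u v q :
  walk star_src star_dst u v (map inl q) = walk src dst u v q.
Proof.
elim: q u => [|e q IHq] u //; case: q IHq => [|e' q] IHq //.
rewrite -[LHS]/((src e == u) && walk star_src star_dst (dst e) v (map inl (e' :: q))).
by rewrite IHq.
Qed.

Lemma star_path_inl u v p :
  is_path star_src star_dst u v (map inl p) = is_path src dst u v p.
Proof. by rewrite /is_path star_walk_inl -map_comp. Qed.

Lemma star_wcol_inl_le c p : wcol star_weight star_col c (map inl p) <= wcol w col c p.
Proof. by rewrite /wcol big_map ler_sum // => e _; exact: mono_dist_le_edge. Qed.

Lemma star_minimal_path u v p : minimal_path src dst w col u v p ->
  minimal_path star_src star_dst star_weight star_col u v (map inl p).
Proof.
move=> p_min; have [Hp _] := p_min; split; first by rewrite star_path_inl.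
case=> q [/andP[Hq _] Hle [c0 Hlt]].
have Hle' c : wcol star_weight star_col c q <= wcol w col c p.
  exact: le_trans (Hle c) (star_wcol_inl_le c p).
have Hreal a : a \in q -> exists2 s,
    walk src dst (star_src a) (star_dst a) s && monochrome col (star_col a) s &
    weight w s <= star_weight a.
  move=> Ha; have: star_weight a < wcap.
    apply: le_lt_trans (mem_le_wcol _ (fun a => ltW (mono_dist_gt0 _ _ _)) Ha) _.
    apply: le_lt_trans (Hle' _) _; apply: le_lt_trans (wcol_le_weight _ w_ge0 _ _) _.
    exact: weight_lt_cap (path_uniq Hp).
  by case/mono_dist_witness => s Hs Hweight; exists s; rewrite // /star_weight Hweight.
have [Q HQ HQle] := walk_expand Hq Hreal.
have Heq := minimal_path_dominating_walk w_ge0 src_neq_dst c0 p_min HQ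
  (fun c => le_trans (HQle c) (Hle' c)).
have := le_lt_trans (HQle c0) (lt_le_trans Hlt (star_wcol_inl_le c0 p)).
by rewrite Heq ltxx.
Qed.
End Completion.

Theorem lemma1 (R : realFieldType) (V E : finType) (M : eqType)
  (src dst : E -> V) (w : E -> R) (col : E -> M)
  (HG : wceg src dst w col)
  (Hnp : no_parallel_same_colour src dst col) :
  exists (F : Type) (src' dst' : (E + F)%type -> V)
         (w' : (E + F)%type -> R) (col' : (E + F)%type -> M),
    [/\ wceg src' dst' w' col',
        canonical src' dst' w' col',
        forall e : E, src' (inl e) = src e /\ dst' (inl e) = dst e,
        forall e : E, col' (inl e) = col e &
        forall (u v : V) (p : seq E),
          minimal_path src dst w col u v p ->
          minimal_path src' dst' w' col' u v (map inl p)].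
Proof.
exists (missing_edge src dst col), (@star_src _ _ _ src dst col),
  (@star_dst _ _ _ src dst col), (@star_weight _ _ _ _ src dst w col),
  (@star_col _ _ _ src dst col).
split=> //; first exact: star_wceg.
  exact: star_canonical.
exact: star_minimal_path.
Qed.
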